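(* Let $e_1,e_2,\dots$ be an exchangeable sequence of real random variables with $|e_i|\le K$ almost surely for a constant $K$. Let $M_k=\frac1k\sum_{i=1}^ke_i$ and $M_\infty=\lim_{k\to\infty}M_k$ (which exists almost surely). For every $\varepsilon>0$ there exists $\eta=\eta(K,\varepsilon)>0$, depending only on $K$ and $\varepsilon$, such that for all $l\in\mathbb N$ and all $n\in\mathbb N\cup\{\infty\}$ with $l<n$, $$\mathbb P\{|M_n-M_l|\ge\varepsilon\}\le2e^{-\eta l}.$$ *)

From HB Require Import structures.
From mathcomp Require Import all_boot all_order all_algebra all_fingroup.
From mathcomp Require Import all_classical all_reals all_analysis.
Set Implicit Arguments. Unset Strict Implicit. Unset Printing Implicit Defensive.
Import Order.TTheory GRing.Theory Num.Theory.
Local Open Scope classical_set_scope.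
Local Open Scope ring_scope.

(* Joint laws on R^n are compared on measurable rectangles B_0 x ... x B_{n-1},
   which form a pi-system generating the product sigma-algebra. *)
Definition exchangeable d (T : measurableType d) (R : realType)
    (P : probability T R) (e : nat -> T -> R) : Prop :=
  forall (n : nat) (s : 'S_n) (B : 'I_n -> set R),
    (forall i, measurable (B i)) ->
    P [set w | forall i : 'I_n, B i (e (s i) w)] =
    P [set w | forall i : 'I_n, B i (e i w)].

(* Empirical mean M_k = (1/k) sum_{i<k} e_i  (e_1,...,e_k in paper's indexing). *)
Definition Mk (R : realType) (T : Type) (e : nat -> T -> R) (k : nat) (w : T) : R :=
  (k%:R)^-1 * \sum_(i < k) e i w.

From HB Require Import structures.
From mathcomp Require Import all_boot all_order all_algebra all_fingroup.
From mathcomp Require Import all_classical all_reals all_analysis.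
From mathcomp Require Import lra ring.
Import Order.TTheory GRing.Theory Num.Theory numFieldNormedType.Exports.
Set Implicit Arguments. Unset Strict Implicit. Unset Printing Implicit Defensive.
Local Open Scope classical_set_scope.
Local Open Scope ring_scope.

(* By exchangeability, conditionally on the values of e_1, ..., e_n the first l of
   them are a uniform sample without replacement, and such samples concentrate like
   independent ones (Hoeffding).  To avoid conditioning, the values are quantized to a
   finite grid of mesh eps/8: the law of the first n quantized variables is then a
   permutation-invariant weight on n-tuples of grid cells.  For such a weight the
   deviation D_l = x_1 + ... + x_l - l * mean(x_1, ..., x_n) has exponential moments
   E exp(t D_l) <= exp(8 K^2 t^2 l): peeling off x_1 rescales the deviation of the
   remaining n - 1 values, and by symmetry x_1 may be replaced by the average over all
   n coordinates, where Hoeffding's lemma applies.  A Chernoff bound on both tails gives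
   the estimate for finite n, and the case n = oo follows by continuity of the measure
   along the events "|M_k - M_l| >= eps/2 for all large k". *)

Section EmpiricalMean.
Variable R : realType.

Lemma expR_le_1DxDsqr (y : R) : `|y| <= 2^-1 -> expR y <= 1 + y + 2 * y ^+ 2.
Proof.
rewrite ler_norml => /andP[ylo yhi].
have hp : 0 < 1 - y by lra.
have h1 : 1 - y <= expR (- y) by exact: expR_ge1Dx.
rewrite -[expR y]invrK -expRN.
have -> : 1 + y + 2 * y ^+ 2 = (1 - y)^-1 * ((1 - y) * (1 + y + 2 * y ^+ 2)).
  by rewrite mulKf // gt_eqF.
rewrite -[X in X <= _]mulr1; apply: ler_pM.
- by rewrite invr_ge0 ltW ?expR_gt0.
- lra.
- by rewrite lef_pV2 ?posrE ?expR_gt0.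
- have : 0 <= y ^+ 2 * (1 - 2 * y) by apply: mulr_ge0; [exact: sqr_ge0 | lra].
  by rewrite expr2; nra.
Qed.

Lemma sumr_const_seq (I : Type) (r : seq I) (c : R) :
  \sum_(i <- r) c = (size r)%:R * c.
Proof. by rewrite big_const_seq count_predT iter_addr_0 mulr_natl. Qed.

Definition mean_seq (xs : seq R) : R := (size xs)%:R^-1 * \sum_(x <- xs) x.

Lemma perm_mean_seq (xs ys : seq R) : perm_eq xs ys -> mean_seq xs = mean_seq ys.
Proof. by move=> h; rewrite /mean_seq (perm_size h) (perm_big _ h). Qed.

Lemma mulr_size_mean_seq (xs : seq R) : (0 < size xs)%N ->
  (size xs)%:R * mean_seq xs = \sum_(x <- xs) x.
Proof. by move=> hs; rewrite mulrA mulfV ?mul1r // pnatr_eq0 -lt0n. Qed.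

Lemma norm_mean_seq_le (K : R) (xs : seq R) : 0 <= K ->
  (forall x, x \in xs -> `|x| <= K) -> `|mean_seq xs| <= K.
Proof.
move=> hK hx; rewrite /mean_seq normrM.
case: (posnP (size xs)) => [->|hs]; first by rewrite invr0 normr0 mul0r.
rewrite ger0_norm ?invr_ge0 ?ler0n // ler_pdivrMl ?ltr0n // -sumr_const_seq.
apply: (le_trans (ler_norm_sum _ _ _)).
by rewrite big_seq [X in _ <= X]big_seq; apply: ler_sum.
Qed.

Lemma expR_centered_le (K u x m : R) : 0 <= u -> 4 * K * u <= 1 ->
  `|x| <= K -> `|m| <= K -> expR (u * (x - m)) <= 1 + u * (x - m) + 8 * K ^+ 2 * u ^+ 2.
Proof.
move=> hu hKu hx hm.
have hd : `|x - m| <= 2 * K by apply: (le_trans (ler_normB _ _)); lra.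
have hy : `|u * (x - m)| <= 2^-1.
  rewrite normrM ger0_norm //.
  have : u * `|x - m| <= u * (2 * K) by apply: ler_wpM2l.
  lra.
apply: (le_trans (expR_le_1DxDsqr hy)); rewrite lerD2l.
have hd2 : (x - m) ^+ 2 <= (2 * K) ^+ 2.
  by rewrite -real_normK ?num_real // lerXn2r // ?nnegrE // (le_trans _ hd).
have : u ^+ 2 * (x - m) ^+ 2 <= u ^+ 2 * (2 * K) ^+ 2 by rewrite ler_wpM2l ?sqr_ge0.
by rewrite !exprMn; lra.
Qed.

Lemma mean_seq_expR_centered_le (K u : R) (xs : seq R) : (0 < size xs)%N ->
  0 <= u -> 4 * K * u <= 1 -> (forall x, x \in xs -> `|x| <= K) ->
  mean_seq [seq expR (u * (x - mean_seq xs)) | x <- xs] <= expR (8 * K ^+ 2 * u ^+ 2).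
Proof.
move=> hs hu hKu hx.
have [x0 x0xs] : exists x, x \in xs by case: xs hs {hx} => // x ? _; exists x; exact: mem_head.
have hK : 0 <= K := le_trans (normr_ge0 x0) (hx x0 x0xs).
set m := mean_seq xs; set c := 8 * K ^+ 2 * u ^+ 2.
have hm : `|m| <= K by exact: norm_mean_seq_le.
have hN : 0 < (size xs)%:R :> R by rewrite ltr0n.
rewrite /mean_seq size_map big_map ler_pdivrMl //.
apply: (@le_trans _ _ (\sum_(x <- xs) (1 + u * (x - m) + c))).
  by rewrite big_seq [X in _ <= X]big_seq; apply: ler_sum => x /hx hxK; exact: expR_centered_le.
rewrite !big_split /= -big_distrr /= big_split /= sumrN !sumr_const_seq.
by rewrite -mulr_size_mean_seq // subrr mulr0 addr0 -mulrDr ler_pM2l // expR_ge1Dx.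
Qed.

Definition prefix_dev (l : nat) (xs : seq R) : R :=
  \sum_(x <- take l xs) x - l%:R * mean_seq xs.

Lemma prefix_dev0 (xs : seq R) : prefix_dev 0 xs = 0.
Proof. by rewrite /prefix_dev take0 big_nil mul0r subrr. Qed.

Lemma prefix_devS (l : nat) (x : R) (xs : seq R) : (l <= size xs)%N ->
  prefix_dev l.+1 (x :: xs) =
  (1 - l%:R / (size xs)%:R) * (x - mean_seq (x :: xs)) + prefix_dev l xs.
Proof.
move=> hl; rewrite /prefix_dev /mean_seq /= !big_cons.
case: (posnP l) => [->|hl0]; first by rewrite !mul0r subr0 mul1r subr0 mul1r addrAC.
have hN : (size xs)%:R != 0 :> R by rewrite pnatr_eq0 -lt0n (leq_trans hl0).
rewrite -!natr1 in hN *; field.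
by rewrite hN natr1 pnatr_eq0.
Qed.

Lemma prefix_devN (l : nat) (xs : seq R) :
  prefix_dev l [seq - x | x <- xs] = - prefix_dev l xs.
Proof. by rewrite /prefix_dev /mean_seq size_map -map_take !big_map !sumrN; ring. Qed.

Lemma mean_seq_take (l : nat) (xs : seq R) : (0 < l)%N -> (l <= size xs)%N ->
  mean_seq xs - mean_seq (take l xs) = - (l%:R^-1 * prefix_dev l xs).
Proof.
move=> hl hls; rewrite /prefix_dev /mean_seq size_take_min (minn_idPl hls).
have hl' : l%:R != 0 :> R by rewrite pnatr_eq0 -lt0n.
have hs : (size xs)%:R != 0 :> R by rewrite pnatr_eq0 -lt0n (leq_trans hl hls).
by field; rewrite hs hl'.
Qed.

End EmpiricalMean.

Definition perm_invariant (A : eqType) (V : Type) n (p : n.-tuple A -> V) :=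
  forall s s' : n.-tuple A, perm_eq s s' -> p s = p s'.

Lemma big_cons_tuple (V : Type) (idx : V) (op : Monoid.com_law idx) (A : finType) n
    (F : n.+1.-tuple A -> V) :
  \big[op/idx]_(s : n.+1.-tuple A) F s =
  \big[op/idx]_(a : A) \big[op/idx]_(s : n.-tuple A) F (cons_tuple a s).
Proof.
rewrite pair_bigA /= (reindex (fun p : A * n.-tuple A => cons_tuple p.1 p.2)) //=.
exists (fun s => (thead s, behead_tuple s)) => [[a s] _ | s _] /=.
  by congr pair; apply: val_inj.
by apply: val_inj => /=; case: s => -[|x s] //= _; rewrite /thead tnth0.
Qed.

Lemma expR_two_sided_ge1 (R : realType) (t c h : R) : 0 <= t -> c <= `|h| ->
  1 <= expR (- (t * c)) * (expR (t * h) + expR (- (t * h))).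
Proof.
move=> ht hc; rewrite mulrDr -!expRD.
have ge1 y : c <= y -> 1 <= expR (- (t * c) + t * y).
  by move=> hy; rewrite -expR0 ler_expR addrC subr_ge0 ler_wpM2l.
case: (lerP 0 h) => h0.
- by rewrite ger0_norm // in hc; rewrite (le_trans (ge1 h hc)) // lerDl expR_ge0.
- by rewrite ltr0_norm // in hc; rewrite -[- (t * h)]mulrN (le_trans (ge1 _ hc)) // lerDr expR_ge0.
Qed.

Section PermInvariantWeights.
Variables (R : realType) (A : finType).

Lemma sum_tnth_perm_invariant n (F : A -> n.-tuple A -> R) (i j : 'I_n) :
  (forall a, perm_invariant (F a)) ->
  \sum_(s : n.-tuple A) F (tnth s i) s = \sum_(s : n.-tuple A) F (tnth s j) s.
Proof.
move=> hF; pose h (s : n.-tuple A) := [tuple tnth s (tperm i j k) | k < n].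
have hK : involutive h by move=> s; apply: eq_from_tnth => k; rewrite !tnth_mktuple tpermK.
have hperm s : perm_eq (h s) s by apply/tuple_permP; exists (tperm i j).
rewrite (reindex_inj (can_inj hK)); apply: eq_bigr => s _.
by rewrite (hF _ _ _ (hperm s)) tnth_mktuple tpermL.
Qed.

Lemma sum_thead_perm_invariant n (F : A -> n.+1.-tuple A -> R) :
  (forall a, perm_invariant (F a)) ->
  \sum_(s : n.+1.-tuple A) F (thead s) s =
  \sum_(s : n.+1.-tuple A) (n.+1)%:R^-1 * \sum_(i < n.+1) F (tnth s i) s.
Proof.
move=> hF; rewrite -mulr_sumr exchange_big /=.
have -> : \sum_(i < n.+1) \sum_(s : n.+1.-tuple A) F (tnth s i) s =
          \sum_(i < n.+1) \sum_(s : n.+1.-tuple A) F (thead s) s.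
  by apply: eq_bigr => i _; exact: sum_tnth_perm_invariant.
set S := \sum_(s : n.+1.-tuple A) F (thead s) s.
by rewrite sumr_const card_ord -(mulr_natl S) mulKf // pnatr_eq0.
Qed.

Variables (v : A -> R) (K : R).
Hypotheses (hK : 0 <= K) (hv : forall a, `|v a| <= K).

Lemma mgf_centered_thead_le n (p : n.+1.-tuple A -> R) (u : R) :
  (forall s, 0 <= p s) -> perm_invariant p -> 0 <= u -> 4 * K * u <= 1 ->
  \sum_(s : n.+1.-tuple A) p s * expR (u * (v (thead s) - mean_seq (map v s))) <=
  expR (8 * K ^+ 2 * u ^+ 2) * \sum_(s : n.+1.-tuple A) p s.
Proof.
move=> hp0 hp hu hKu.
pose F a s := p s * expR (u * (v a - mean_seq (map v s))).
rewrite (sum_thead_perm_invariant (F := F)); last first.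
  by move=> a s s' hs; rewrite /F (hp _ _ hs) (perm_mean_seq (perm_map v hs)).
rewrite mulr_sumr; apply: ler_sum => s _.
rewrite -big_distrr mulrCA [X in _ <= X]mulrC ler_wpM2l //.
have hvs : forall x, x \in map v s -> `|x| <= K by move=> x /mapP[a _ ->].
have := mean_seq_expR_centered_le _ hu hKu hvs.
by rewrite size_map size_tuple /mean_seq !size_map size_tuple !big_map big_tuple; apply.
Qed.

Lemma mgf_prefix_dev_le (t : R) (l : nat) : 0 <= t -> 4 * K * t <= 1 ->
  forall n (p : n.-tuple A -> R), (l <= n)%N -> (forall s, 0 <= p s) -> perm_invariant p ->
  \sum_(s : n.-tuple A) p s * expR (t * prefix_dev l (map v s)) <=
  expR (8 * K ^+ 2 * t ^+ 2 * l%:R) * \sum_(s : n.-tuple A) p s.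
Proof.
move=> ht hKt; elim: l => [|l IH] n p hln hp0 hp.
  by rewrite mulr0 expR0 mul1r; apply: ler_sum => s _; rewrite prefix_dev0 mulr0 expR0 mulr1.
case: n p hln hp0 hp => [//|n] p hln hp0 hp.
pose a : R := 1 - l%:R / n%:R.
have ha0 : 0 <= a.
  rewrite subr_ge0; case: (posnP n) => [->|hn]; first by rewrite invr0 mulr0.
  by rewrite ler_pdivrMr ?ltr0n // mul1r ler_nat.
have ha1 : a <= 1 by rewrite lerBlDr lerDl divr_ge0.
pose G (s : n.+1.-tuple A) := p s * expR (t * a * (v (thead s) - mean_seq (map v s))).
have peel : \sum_(s : n.+1.-tuple A) p s * expR (t * prefix_dev l.+1 (map v s)) <=
            expR (8 * K ^+ 2 * t ^+ 2 * l%:R) * \sum_(s : n.+1.-tuple A) G s.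
  rewrite !big_cons_tuple big_distrr /=; apply: ler_sum => c _.
  pose q (w : n.-tuple A) := G (cons_tuple c w).
  have hq : perm_invariant q.
    move=> w w' hw; have hc : perm_eq (cons_tuple c w) (cons_tuple c w') by rewrite /= perm_cons.
    by rewrite /q /G (hp _ _ hc) (perm_mean_seq (perm_map v hc)).
  apply: le_trans (IH n q hln (fun w => mulr_ge0 (hp0 _) (expR_ge0 _)) hq).
  apply: ler_sum => w _; rewrite /q /G /= prefix_devS ?size_map ?size_tuple //.
  by rewrite mulrDr expRD /thead tnth0 !mulrA.
apply: (le_trans peel); rewrite -[l.+1%:R]natr1 mulrDr mulr1 expRD.
rewrite -[expR _ * expR _ * _]mulrA ler_pM2l ?expR_gt0 //.
apply: (le_trans (mgf_centered_thead_le hp0 hp (mulr_ge0 ht ha0) _)).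
  by apply: le_trans hKt; apply: ler_wpM2l; rewrite ?mulr_ge0 ?ler_piMr.
rewrite ler_wpM2r ?sumr_ge0 // ler_expR ler_wpM2l ?mulr_ge0 ?sqr_ge0 //.
by rewrite exprMn ler_piMr ?sqr_ge0 // expr2 mulr_ile1.
Qed.


End PermInvariantWeights.

(* The exponent obtained from the Chernoff bound with t = eps / (16 K^2). *)
Definition hoeffding_rate (R : realType) (K eps : R) := eps ^+ 2 / (32 * K ^+ 2).

Section HoeffdingTail.
Variables (R : realType) (A : finType) (v : A -> R) (K : R).
Hypotheses (hK : 0 < K) (hv : forall a, `|v a| <= K).

Lemma tail_mean_take_le n l (p : n.-tuple A -> R) (eps : R) :
  0 < eps -> eps <= 4 * K -> (0 < l)%N -> (l <= n)%N ->
  (forall s, 0 <= p s) -> perm_invariant p ->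
  \sum_(s : n.-tuple A) p s *
     (eps <= `|mean_seq (map v s) - mean_seq (take l (map v s))|)%R%:R
  <= 2 * expR (- (hoeffding_rate K eps * l%:R)) * \sum_(s : n.-tuple A) p s.
Proof.
move=> heps heps4 hl hln hp0 hp.
pose t := eps / (16 * K ^+ 2).
have ht : 0 <= t by rewrite divr_ge0 ?mulr_ge0 ?sqr_ge0 // ltW.
have hKt : 4 * K * t <= 1.
  have -> : 4 * K * t = eps / (4 * K) by rewrite /t; field; rewrite gt_eqF.
  by rewrite ler_pdivrMr ?mulr_gt0 // mul1r.
pose nv a := - v a.
have hnv a : `|nv a| <= K by rewrite normrN.
pose c := expR (- (t * (l%:R * eps))).
have chernoff (s : n.-tuple A) :
    (eps <= `|mean_seq (map v s) - mean_seq (take l (map v s))|)%R%:R <=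
    c * (expR (t * prefix_dev l (map v s)) + expR (t * prefix_dev l (map nv s))).
  have -> : map nv s = [seq - x | x <- map v s] by rewrite -map_comp.
  set dev := `|_ - _|; rewrite prefix_devN mulrN.
  case: (lerP eps dev) => [hdev|_] /=; last by rewrite mulr_ge0 ?addr_ge0 ?expR_ge0.
  apply: expR_two_sided_ge1 => //.
  have hl' : 0 < l%:R :> R by rewrite ltr0n.
  rewrite /dev mean_seq_take ?size_map ?size_tuple // normrN normrM gtr0_norm ?invr_gt0 // in hdev.
  by rewrite -ler_pdivlMl.
apply: (@le_trans _ _ (\sum_(s : n.-tuple A) p s * (c *
    (expR (t * prefix_dev l (map v s)) + expR (t * prefix_dev l (map nv s)))))).
  by apply: ler_sum => s _; rewrite ler_wpM2l.
under eq_bigr do rewrite mulrCA mulrDr.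
rewrite -mulr_sumr big_split /=.
have hv1 := mgf_prefix_dev_le (ltW hK) hv ht hKt hln hp0 hp.
have hv2 := mgf_prefix_dev_le (ltW hK) hnv ht hKt hln hp0 hp.
apply: (le_trans (ler_wpM2l (expR_ge0 _) (lerD hv1 hv2))).
have -> : - (hoeffding_rate K eps * l%:R) = - (t * (l%:R * eps)) + 8 * K ^+ 2 * t ^+ 2 * l%:R.
  by rewrite /t /hoeffding_rate; field; rewrite gt_eqF.
by rewrite expRD le_eqVlt; apply/orP; left; apply/eqP; ring.
Qed.

End HoeffdingTail.

Section Grid.
Variables (R : realType) (K del : R).
Hypotheses (hK : 0 < K) (hdel : 0 < del).

Definition grid_size := Num.truncn (2 * K / del).

Definition grid_point (c : 'I_grid_size.+1) : R := - K + (c : nat)%:R * del.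

(* Cells [grid_point c, grid_point c + del[ covering [-K, K]; the extreme cells are
   extended to infinity so that the cells partition R. *)
Definition grid_cell (c : 'I_grid_size.+1) : set R :=
  (if (c : nat) == 0%N then setT else [set x | grid_point c <= x]) `&`
  (if (c : nat) == grid_size then setT else [set x | x < grid_point c + del]).

Definition grid_index (x : R) : 'I_grid_size.+1 :=
  inord (minn (Num.truncn ((x + K) / del)) grid_size).

Let grid_size_bounds : grid_size%:R * del <= 2 * K < grid_size.+1%:R * del.
Proof.
have h0 : 0 <= 2 * K / del by rewrite divr_ge0 ?mulr_ge0 // ltW.
have /andP[lo hi] := truncn_itv h0.
by rewrite -ler_pdivlMr // -ltr_pdivrMr // lo hi.
Qed.

Lemma norm_grid_point_le c : `|grid_point c| <= K.
Proof.
have /andP[hs _] := grid_size_bounds.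
have h1 : (c : nat)%:R * del <= grid_size%:R * del by rewrite ler_pM2r // ler_nat -ltnS.
have h2 : 0 <= (c : nat)%:R * del by rewrite mulr_ge0 // ltW.
rewrite /grid_point ler_norml; apply/andP; split; lra.
Qed.

Lemma measurable_grid_cell c : measurable (grid_cell c).
Proof.
apply: measurableI; case: ifP => _ //.
- rewrite (_ : [set x | _] = `[grid_point c, +oo[%classic); first exact: measurable_itv.
  by apply/seteqP; split => x /=; rewrite in_itv /= andbT.
- rewrite (_ : [set x | _] = `]-oo, grid_point c + del[%classic); first exact: measurable_itv.
  by apply/seteqP; split => x /=; rewrite in_itv.
Qed.

Lemma grid_cell_dist c x : grid_cell c x -> `|x| <= K -> `|x - grid_point c| <= del.
Proof.
have /andP[_ hs] := grid_size_bounds.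
move=> [h1 h2]; rewrite ler_norml => /andP[xlo xhi].
have lo : grid_point c <= x.
  by move: h1; case: ifP => // /eqP c0 _; rewrite /grid_point c0 mul0r addr0.
have hi : x <= grid_point c + del.
  move: h2; case: ifP => [/eqP cg _|_ /= /ltW //].
  by move: hs; rewrite /grid_point cg -natr1 mulrDl mul1r; lra.
rewrite ler_norml; apply/andP; split; lra.
Qed.

Lemma grid_cell_inj c c' x : grid_cell c x -> grid_cell c' x -> c = c'.
Proof.
wlog le_cc' : c c' / (c <= c')%N => [H|].
  by case: (leqP c c') => h hc hc'; [exact: H | apply/esym/H => //; exact: ltnW].
move=> [_ h2] [h1' _]; apply/val_inj/eqP; rewrite eqn_leq le_cc' /=.
case: leqP => // lt_c'c; exfalso.
have hcg : (c : nat) != grid_size by rewrite neq_ltn (leq_trans lt_c'c) // -ltnS.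
have hc0 : (c' : nat) != 0%N by rewrite -lt0n (leq_ltn_trans _ lt_c'c).
move: h2 h1'; rewrite (negbTE hcg) (negbTE hc0) /grid_point /= => h2 h1'.
have : ((c : nat) + 1)%:R * del <= (c' : nat)%:R * del by rewrite ler_pM2r // ler_nat addn1.
by rewrite natrD mulrDl mul1r; lra.
Qed.

Lemma grid_cell_index x : grid_cell (grid_index x) x.
Proof.
set k := Num.truncn ((x + K) / del).
have hq : (grid_index x : nat) = minn k grid_size by rewrite /grid_index inordK // ltnS geq_minr.
split.
- case: ifP => [_ //|/negbT]; rewrite hq -lt0n => hpos.
  have hk : (0 < k)%N by apply: leq_trans hpos (geq_minl _ _).
  have hx0 : 0 <= (x + K) / del by move: hk; rewrite truncn_gt0 => /(le_trans ler01).
  have := (andP (truncn_itv hx0)).1; rewrite -/k ler_pdivlMr // => hk'.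
  have : (minn k grid_size)%:R * del <= k%:R * del by rewrite ler_pM2r // ler_nat geq_minl.
  rewrite /= /grid_point hq; lra.
- case: ifP => [_ //|/negbT]; rewrite hq => hne /=.
  have hkg : minn k grid_size = k by move: hne; rewrite /minn; case: ltnP => //; rewrite eqxx.
  rewrite /grid_point hq hkg.
  case: (lerP 0 ((x + K) / del)) => hx0.
    have := (andP (truncn_itv hx0)).2; rewrite -/k ltr_pdivrMr // -natr1 mulrDl mul1r; lra.
  have -> : k = 0%N by apply/truncn0Pn; rewrite -ltNge (lt_trans hx0) ?ltr01.
  by rewrite mul0r addr0; move: hx0; rewrite ltr_pdivrMr // mul0r => hx0; have := hdel; lra.
Qed.

End Grid.

Section Atoms.
Variables (T : Type) (R : realType) (m : nat) (B : 'I_m.+1 -> set R).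

Definition atom n (f : nat -> T -> R) (s : n.-tuple 'I_m.+1) : set T :=
  [set w | forall i : 'I_n, B (tnth s i) (f i w)].

Lemma atom_nil (f : nat -> T -> R) : atom f [tuple] = setT.
Proof. by apply/seteqP; split => // w _ []. Qed.

Lemma atom_cons n (f : nat -> T -> R) c (s : n.-tuple 'I_m.+1) :
  atom f (cons_tuple c s) = f 0%N @^-1` B c `&` atom (fun i => f i.+1) s.
Proof.
apply/seteqP; split => w /=.
- move=> h; split; first by have := h ord0; rewrite tnth0.
  by move=> i; have := h (lift ord0 i); rewrite tnthS lift0.
- by move=> [h0 h] i; case: (unliftP ord0 i) => [j ->|->]; rewrite ?tnthS ?lift0 ?tnth0.
Qed.

End Atoms.

Section MeasurableAtoms.
Context d (T : measurableType d) (R : realType).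
Variables (m : nat) (B : 'I_m.+1 -> set R).
Hypothesis mB : forall c, measurable (B c).

Lemma measurable_preimage (g : T -> R) (A : set R) :
  measurable_fun setT g -> measurable A -> measurable (g @^-1` A).
Proof. by move=> mg mA; rewrite -[_ @^-1` _]setTI; exact: mg. Qed.

Lemma measurable_atom n (f : nat -> T -> R) (s : n.-tuple 'I_m.+1) :
  (forall i, measurable_fun setT (f i)) -> measurable (atom B f s).
Proof.
elim: n f s => [|n IH] f s mf; first by rewrite tuple0 atom_nil.
case/tupleP: s => c s; rewrite (atom_cons B f c s).
by apply: measurableI; [exact: measurable_preimage | exact: IH].
Qed.

Hypotheses (coverB : forall x, exists c, B c x)
  (disjB : forall c c' x, B c x -> B c' x -> c = c').

Lemma measure_atom_partition (mu : {measure set T -> \bar R}) n (f : nat -> T -> R)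
    (D : set T) :
  (forall i, measurable_fun setT (f i)) -> measurable D ->
  mu D = (\sum_(s : n.-tuple 'I_m.+1) mu (D `&` atom B f s))%E.
Proof.
elim: n f D => [|n IH] f D mf mD.
  by rewrite (big_pred1 [tuple]) ?atom_nil ?setIT // => s; apply/esym/eqP; exact: tuple0.
have mDc c : measurable (D `&` f 0%N @^-1` B c).
  by apply: measurableI => //; exact: measurable_preimage.
have hD : D = \big[setU/set0]_(c < m.+1) (D `&` f 0%N @^-1` B c).
  rewrite -bigcup_mkord_ord; apply/seteqP; split => [w Dw | w [k _ []//]].
  have [c hc] := coverB (f 0%N w).
  by exists (c : nat); rewrite /= ?ltn_ord ?inord_val.
rewrite {1}hD measure_bigsetU_ord //; last first.
  by move=> c c' _ _ [w [[_ h1] [_ h2]]]; exact: disjB h1 h2.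
rewrite big_cons_tuple; apply: eq_bigr => c _.
apply: etrans (IH (fun i => f i.+1) _ (fun i => mf i.+1) (mDc c)) _.
by apply: eq_bigr => s _; rewrite atom_cons setIA.
Qed.

End MeasurableAtoms.

Lemma measurable_Mk d (T : measurableType d) (R : realType) (e : nat -> T -> R) k :
  (forall i, measurable_fun setT (e i)) -> measurable_fun setT (Mk e k).
Proof. by move=> me; apply: measurable_realfun.measurable_funM => //; exact: measurable_sum. Qed.

Lemma measurable_dev_ge d (T : measurableType d) (R : realType) (f g : T -> R) (a : R) :
  measurable_fun setT f -> measurable_fun setT g -> measurable [set w | a <= `|f w - g w|].
Proof.
move=> mf mg; rewrite -[X in measurable X]setTI.
apply: (measurable_fun_le measurableT (measurable_cst a)).
exact: measurableT_comp (measurable_realfun.measurable_funB mf mg).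
Qed.

Lemma Mk_atom_dist (T : Type) (R : realType) m (B : 'I_m.+1 -> set R)
    (rep : 'I_m.+1 -> R) (K del : R) (e : nat -> T -> R) n (s : n.-tuple 'I_m.+1) w k :
  (forall c x, B c x -> `|x| <= K -> `|x - rep c| <= del) ->
  atom B e s w -> (forall i, `|e i w| <= K) -> (0 < k)%N -> (k <= n)%N ->
  `|Mk e k w - mean_seq (take k (map rep s))| <= del.
Proof.
move=> happrox hs he hk hkn.
have hks : (k <= size (map rep s))%N by rewrite size_map size_tuple.
have hsum : \sum_(y <- take k (map rep s)) y = \sum_(i < k) rep (nth ord0 s i).
  rewrite (big_nth 0) size_take_min (minn_idPl hks) big_mkord; apply: eq_bigr => i _.
  by rewrite nth_take // (nth_map ord0) // size_tuple (leq_trans (ltn_ord i)).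
rewrite /Mk /mean_seq size_take_min (minn_idPl hks) hsum -mulrBr -sumrB normrM.
rewrite gtr0_norm ?invr_gt0 ?ltr0n // ler_pdivrMl ?ltr0n //.
apply: (le_trans (ler_norm_sum _ _ _)).
apply: (@le_trans _ _ (\sum_(i < k) del)); last by rewrite sumr_const card_ord mulr_natl.
apply: ler_sum => i _; have hi : (i < n)%N := leq_trans (ltn_ord i) hkn.
by apply: happrox (he i); have := hs (Ordinal hi); rewrite (tnth_nth ord0).
Qed.

Section ExchangeableAtoms.
Context d (T : measurableType d) (R : realType) (P : probability T R) (e : nat -> T -> R).
Hypotheses (me : forall i, measurable_fun setT (e i)) (hex : exchangeable P e).
Variables (m : nat) (B : 'I_m.+1 -> set R).
Hypothesis mB : forall c, measurable (B c).

Lemma exchangeable_atom_perm n (s s' : n.-tuple 'I_m.+1) :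
  perm_eq s s' -> P (atom B e s) = P (atom B e s').
Proof.
move=> /tuple_permP[sg hs].
have hs' : s = [tuple tnth s' (sg i) | i < n] by apply: val_inj.
rewrite -(hex sg (fun i => mB (tnth s i))); congr (P _); apply/seteqP; split => w /= h.
- by move=> j; have := h (sg^-1 j)%g; rewrite hs' tnth_mktuple permKV.
- by move=> i; rewrite hs' tnth_mktuple; exact: h.
Qed.

Definition atom_weight n (s : n.-tuple 'I_m.+1) : R := fine (P (atom B e s)).

Lemma atom_weightE n (s : n.-tuple 'I_m.+1) : P (atom B e s) = (atom_weight s)%:E.
Proof. by rewrite fineK // fin_num_measure //; exact: measurable_atom. Qed.

Lemma atom_weight_ge0 n (s : n.-tuple 'I_m.+1) : 0 <= atom_weight s.
Proof. exact: fine_ge0. Qed.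

Lemma perm_invariant_atom_weight n : perm_invariant (@atom_weight n).
Proof. by move=> s s' hs; rewrite /atom_weight (exchangeable_atom_perm hs). Qed.

Hypotheses (coverB : forall x, exists c, B c x)
  (disjB : forall c c' x, B c x -> B c' x -> c = c').

Lemma sum_atom_weight n : \sum_(s : n.-tuple 'I_m.+1) atom_weight s = 1.
Proof.
have : P setT = (\sum_(s : n.-tuple 'I_m.+1) P (setT `&` atom B e s))%E
  := measure_atom_partition mB coverB disjB P n me measurableT.
by rewrite probability_setT; under eq_bigr do rewrite setTI atom_weightE; rewrite sumEFin => -[].
Qed.

Variables (rep : 'I_m.+1 -> R) (K del : R).
Hypotheses (hK : 0 < K) (hrep : forall c, `|rep c| <= K)
  (happrox : forall c x, B c x -> `|x| <= K -> `|x - rep c| <= del)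
  (hbound : forall i, {ae P, forall w, `|e i w| <= K}).

Lemma measure_dev_atom_le (eps : R) l n (s : n.-tuple 'I_m.+1) :
  4 * del <= eps -> (0 < l)%N -> (l < n)%N ->
  (P ([set w | (eps <= `|Mk e n w - Mk e l w|)%R] `&` atom B e s) <=
   (atom_weight s *
    (eps / 2 <= `|mean_seq (map rep s) - mean_seq (take l (map rep s))|)%R%:R)%:E)%E.
Proof.
move=> hdel hl hln; set dev := `|_ - _|.
have mA : measurable (atom B e s) by exact: measurable_atom.
have mEA : measurable ([set w | (eps <= `|Mk e n w - Mk e l w|)%R] `&` atom B e s).
  by apply: measurableI => //; apply: measurable_dev_ge; exact: measurable_Mk.
case: (lerP (eps / 2) dev) => [_|hdev] /=.
  by rewrite mulr1 -atom_weightE le_measure ?inE.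
(* Off a null set, the empirical means on the atom are del-close to the grid means, so
   the event forces a grid deviation of at least eps - 2 del >= eps / 2. *)
have [N [mN PN0 hN]] := ae_foralln hbound.
rewrite mulr0 (subset_measure0 mEA mN _ PN0) // => w [/= hw hs].
apply: contrapT => hNw; have heK : forall i, `|e i w| <= K.
  by apply: contrapT => hc; apply: hNw; exact: hN.
have hn := Mk_atom_dist happrox hs heK (leq_ltn_trans (leq0n _) hln) (leqnn n).
have hl' := Mk_atom_dist happrox hs heK hl (ltnW hln).
rewrite take_oversize ?size_map ?size_tuple // in hn.
move: hn hl' hw hdev; rewrite /dev; set a := Mk e n w; set b := Mk e l w.
set x := mean_seq _; set y := mean_seq _ => hn hl' hw hdev.
have : `|a - b| <= `|x - y| + `|a - x| + `|b - y|.
  rewrite (_ : a - b = (x - y) + (a - x) - (b - y)); last by ring.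
  by apply: (le_trans (ler_normB _ _)); rewrite lerD2r ler_normD.
lra.
Qed.

Lemma exchangeable_Mk_dev_le (eps : R) l n :
  0 < eps -> 4 * del <= eps -> eps <= 8 * K -> (0 < l)%N -> (l < n)%N ->
  (P [set w | (eps <= `|Mk e n w - Mk e l w|)%R] <=
   (2 * expR (- (hoeffding_rate K (eps / 2) * l%:R)))%:E)%E.
Proof.
move=> heps hdel hepsK hl hln.
have mE : measurable [set w | eps <= `|Mk e n w - Mk e l w|].
  by apply: measurable_dev_ge; exact: measurable_Mk.
have -> : P [set w | eps <= `|Mk e n w - Mk e l w|] =
    (\sum_(s : n.-tuple 'I_m.+1) P ([set w | (eps <= `|Mk e n w - Mk e l w|)%R] `&` atom B e s))%E
  := measure_atom_partition mB coverB disjB P n me mE.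
apply: (@le_trans _ _ (\sum_(s : n.-tuple 'I_m.+1) (atom_weight s *
    (eps / 2 <= `|mean_seq (map rep s) - mean_seq (take l (map rep s))|)%R%:R)%:E)%E).
  by apply: lee_sum => s _; exact: measure_dev_atom_le.
rewrite sumEFin lee_fin.
have := tail_mean_take_le hK hrep (p := @atom_weight n) (eps := eps / 2) _ _ hl (ltnW hln)
  (@atom_weight_ge0 n) (@perm_invariant_atom_weight n).
by rewrite sum_atom_weight mulr1; apply; lra.
Qed.

End ExchangeableAtoms.

Lemma exchangeable_Mk_dev_bound d (T : measurableType d) (R : realType)
    (P : probability T R) (e : nat -> T -> R) (K eps : R) l n :
  (forall i, measurable_fun setT (e i)) -> exchangeable P e ->
  (forall i, {ae P, forall w, `|e i w| <= K}) ->
  0 < K -> 0 < eps -> eps <= 8 * K -> (0 < l)%N -> (l < n)%N ->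
  (P [set w | (eps <= `|Mk e n w - Mk e l w|)%R] <=
   (2 * expR (- (hoeffding_rate K (eps / 2) * l%:R)))%:E)%E.
Proof.
move=> me hex hbound hK heps hepsK hl hln.
have hdel : 0 < eps / 4 by rewrite divr_gt0.
have coverB x : exists c, grid_cell (K:=K) (del:=eps / 4) c x.
  by exists (grid_index K (eps / 4) x); exact: grid_cell_index.
apply: (exchangeable_Mk_dev_le me hex (@measurable_grid_cell _ K (eps / 4)) coverB
  (@grid_cell_inj _ K _ hdel) hK (norm_grid_point_le hK hdel) (grid_cell_dist hK hdel) hbound)
  => //.
by rewrite mulrC divfK.
Qed.

Section DeviationLimit.
Context d (T : measurableType d) (R : realType) (mu : {measure set T -> \bar R}).

Lemma measure_bigcup_nondecreasing_le (F : (set T)^nat) (c : \bar R) :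
  (forall k, measurable (F k)) -> nondecreasing_seq F ->
  (forall k, (mu (F k) <= c)%E) -> (mu (\bigcup_k F k) <= c)%E.
Proof.
move=> mF ndF hc; have cvgF := @nondecreasing_cvg_mu _ _ _ mu F mF (bigcupT_measurable F mF) ndF.
rewrite -(cvg_lim _ cvgF) //; apply: lime_le; first by apply/cvg_ex; exists (mu (\bigcup_k F k)).
exact: nearW.
Qed.

Lemma measure_dev_lim_le (f : nat -> T -> R) (g h : T -> R) (eps c : R) (N : nat) :
  (forall k, measurable_fun setT (f k)) -> measurable_fun setT g -> measurable_fun setT h ->
  {ae mu, forall w, (fun k => f k w) @ \oo --> g w} -> 0 < eps ->
  (forall k, (N <= k)%N -> (mu [set w | (eps / 2 <= `|f k w - h w|)%R] <= c%:E)%E) ->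
  (mu [set w | (eps <= `|g w - h w|)%R] <= c%:E)%E.
Proof.
move=> mf mg mh [N' [mN' muN' hN']] heps hc.
have heps2 : 0 < eps / 2 by rewrite divr_gt0.
pose A k := [set w | (eps / 2 <= `|f (N + k)%N w - h w|)%R].
pose F j := \bigcap_(k in [set k | (j <= k)%N]) A k.
have mA k : measurable (A k) by exact: measurable_dev_ge.
have mF j : measurable (F j) by apply: bigcap_measurable => //; exists j => /=.
have ndF : nondecreasing_seq F.
  by move=> j j' jj'; rewrite subsetEset => w Fw k /= j'k; apply: Fw; exact: leq_trans j'k.
have hF j : (mu (F j) <= c%:E)%E.
  apply: le_trans (hc (N + j)%N (leq_addr _ _)).
  by apply: le_measure; rewrite ?inE; [exact: mF | exact: mA | apply: bigcap_inf => /=].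
have mE : measurable [set w | (eps <= `|g w - h w|)%R] by exact: measurable_dev_ge.
have sub : [set w | (eps <= `|g w - h w|)%R] `<=` \bigcup_j F j `|` N'.
  move=> w /= hw; have [|nN'w] := pselect (N' w); [by right | left].
  have : (fun k => f k w) @ \oo --> g w by apply: contrapT => hcv; apply: nN'w; exact: hN'.
  move/cvgrPdist_lt => /(_ _ heps2)[j _ hj]; exists j => // k /= jk.
  have := hj (N + k)%N (leq_trans jk (leq_addl _ _)).
  have : `|g w - h w| <= `|g w - f (N + k)%N w| + `|f (N + k)%N w - h w|.
    rewrite (_ : g w - h w = (g w - f (N + k)%N w) + (f (N + k)%N w - h w)) ?ler_normD //.
    by ring.
  rewrite /A /=; lra.
apply: (le_trans (le_measure _ _ _ sub)); rewrite ?inE //.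
  by apply: measurableU => //; exact: bigcupT_measurable.
apply: (le_trans (measureU2 _ (bigcupT_measurable _ mF) mN')).
by rewrite [X in (_ + X)%E]muN' adde0; exact: measure_bigcup_nondecreasing_le.
Qed.

End DeviationLimit.

Theorem mainTheorem6 (R : realType) (K eps : R) (heps : 0 < eps) :
  exists2 eta : R, 0 < eta &
  forall (d : measure_display) (T : measurableType d) (P : probability T R)
         (e : nat -> T -> R) (Minf : T -> R),
    (forall i, measurable_fun setT (e i)) ->
    exchangeable P e ->
    (forall i, {ae P, forall w, `|e i w| <= K}) ->
    measurable_fun setT Minf ->
    {ae P, forall w, (fun k => Mk e k w) @ \oo --> Minf w} ->
    (forall l n : nat, (l < n)%N ->
       (P [set w | (eps <= `|Mk e n w - Mk e l w|)%R]
         <= (2 * expR (- (eta * l%:R)))%:E)%E) /\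
    (forall l : nat,
       (P [set w | (eps <= `|Minf w - Mk e l w|)%R]
         <= (2 * expR (- (eta * l%:R)))%:E)%E).
Proof.
(* K0 > 0 even if K <= 0, and eps / 2 <= 8 * K0 as Hoeffding's lemma requires. *)
pose K0 := `|K| + eps; have hK0 : 0 < K0 by rewrite ltr_wpDl.
pose eta := hoeffding_rate K0 (eps / 2 / 2).
exists eta => [|d T P e Minf me hex hae mMinf hconv].
  by rewrite divr_gt0 ?exprn_gt0 ?mulr_gt0 ?divr_gt0.
have mMk k : measurable_fun setT (Mk e k) := measurable_Mk k me.
have hbound i : {ae P, forall w, `|e i w| <= K0}.
  by apply: filterS (hae i) => w hw; have := ler_norm K; rewrite /K0; lra.
have half_bound l n : (0 < l)%N -> (l < n)%N ->
    (P [set w | (eps / 2 <= `|Mk e n w - Mk e l w|)%R] <=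
     (2 * expR (- (eta * l%:R)))%:E)%E.
  move=> hl hln; apply: exchangeable_Mk_dev_bound => //; first by rewrite divr_gt0.
  by rewrite /K0; have := normr_ge0 K; lra.
have at0 (A : set T) : measurable A -> (P A <= (2 * expR (- (eta * 0%:R)))%:E)%E.
  move=> mA; rewrite mulr0 oppr0 expR0 mulr1 (le_trans (probability_le1 P mA)) //.
  by rewrite lee_fin ler1n.
split=> [l n hln | l]; have [->|hl] := posnP l; try exact/at0/measurable_dev_ge.
- apply: le_trans (half_bound l n hl hln).
  apply: le_measure; rewrite ?inE; try exact: measurable_dev_ge.
  by move=> w /=; apply: le_trans; rewrite ler_pdivrMr // ler_pMr //; lra.
- apply: (measure_dev_lim_le (N := l.+1) mMk mMinf (mMk l) hconv heps) => k.
  exact: half_bound.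
Qed.
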